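(* Let $(X_n,x_n)$ be pointed proper metric spaces, $\Gamma_n\le\mathrm{Isom}(X_n)$, and let $\omega$ be a non-principal ultrafilter. If the ultralimit space $X_\omega$ is proper, then the ultralimit group $\Gamma_\omega$ is a closed subgroup of $\mathrm{Isom}(X_\omega)$ (for the topology of uniform convergence on compact subsets).
   Context: A non-principal ultrafilter $\omega$ is a finitely additive $\{0,1\}$-valued measure on subsets of $\mathbb N$ vanishing on finite sets; $\omega$-$\lim a_n$ denotes the ultralimit of a bounded real sequence. The ultralimit $(X_\omega,x_\omega)$ consists of sequences $(y_n)$, $y_n\in X_n$, with $d(x_n,y_n)\le M$ $\omega$-a.s. for some $M$, modulo $\omega$-$\lim d(y_n,y'_n)=0$, with metric $\omega$-$\lim d(y_n,y'_n)$. A sequence $g_n\in\mathrm{Isom}(X_n)$ is admissible if $d(g_nx_n,x_n)\le M$ $\omega$-a.s. for some $M$; it defines an isometry $\omega$-$\lim g_n$ of $X_\omega$ by $(y_n)\mapsto(g_ny_n)$. The ultralimit group is $\Gamma_\omega=\{\omega\text{-}\lim g_n: (g_n)\text{ admissible}, g_n\in\Gamma_n\ \omega\text{-a.s.}\}$. *)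

From Stdlib Require Import Reals Classical ClassicalEpsilon List.
Open Scope R_scope.
Set Implicit Arguments.
Unset Strict Implicit.

Definition is_metric (T : Type) (d : T -> T -> R) : Prop :=
  (forall a b, d a b = 0 <-> a = b) /\
  (forall a b, d a b = d b a) /\
  (forall a b c, d a c <= d a b + d b c).

Definition mopen (T : Type) (d : T -> T -> R) (U : T -> Prop) : Prop :=
  forall a, U a -> exists r, 0 < r /\ forall b, d a b < r -> U b.

Definition mcompact (T : Type) (d : T -> T -> R) (K : T -> Prop) : Prop :=
  forall (I : Type) (U : I -> T -> Prop),
    (forall i, mopen d (U i)) ->
    (forall a, K a -> exists i, U i a) ->
    exists l : list I, forall a, K a -> exists i, In i l /\ U i a.

Definition mproper (T : Type) (d : T -> T -> R) : Prop :=
  forall a r, mcompact d (fun b => d a b <= r).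

Definition isometry (T : Type) (d : T -> T -> R) (f : T -> T) : Prop :=
  (forall a b, d (f a) (f b) = d a b) /\ (forall b, exists a, f a = b).

Definition is_subgroup_isom (T : Type) (d : T -> T -> R) (G : (T -> T) -> Prop) : Prop :=
  (forall g, G g -> isometry d g) /\
  G (fun a => a) /\
  (forall g h, G g -> G h -> G (fun a => g (h a))) /\
  (forall g, G g -> exists h, G h /\ (forall a, h (g a) = a) /\ (forall a, g (h a) = a)).

(* G (a set of isometries) is closed in Isom(T,d) for the topology of
   uniform convergence on compact subsets: every isometry f lying in the
   closure of G (every basic neighbourhood {h | sup_K d(h,f) < eps} of f
   meets G) belongs to G. *)
Definition ucc_closed (T : Type) (d : T -> T -> R) (G : (T -> T) -> Prop) : Prop :=
  forall f, isometry d f ->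
    (forall K, mcompact d K -> forall eps, 0 < eps ->
       exists g, G g /\ forall a, K a -> d (g a) (f a) < eps) ->
    G f.

Definition nonprincipal_ultrafilter (om : (nat -> Prop) -> R) : Prop :=
  (forall A, om A = 0 \/ om A = 1) /\
  om (fun _ => True) = 1 /\
  (forall A B, (forall n, A n -> B n -> False) ->
     om (fun n => A n \/ B n) = om A + om B) /\
  (forall A, (exists N, forall n, A n -> (n < N)%nat) -> om A = 0).

Definition om_as (om : (nat -> Prop) -> R) (P : nat -> Prop) : Prop := om P = 1.

Definition ulim (om : (nat -> Prop) -> R) (a : nat -> R) (L : R) : Prop :=
  forall eps, 0 < eps -> om_as om (fun n => Rabs (a n - L) < eps).

Definition adm_seq (X : nat -> Type) (d : forall n, X n -> X n -> R)
  (om : (nat -> Prop) -> R) (x : forall n, X n) (y : forall n, X n) : Prop :=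
  exists M, om_as om (fun n => d n (x n) (y n) <= M).

Definition useq_equiv (X : nat -> Type) (d : forall n, X n -> X n -> R)
  (om : (nat -> Prop) -> R) (y z : forall n, X n) : Prop :=
  ulim om (fun n => d n (y n) (z n)) 0.

(* Points of the ultralimit X_omega: equivalence classes of admissible sequences *)
Record upoint (X : nat -> Type) (d : forall n, X n -> X n -> R)
  (om : (nat -> Prop) -> R) (x : forall n, X n) := UPoint {
  ucls : (forall n, X n) -> Prop;
  ucls_ok : exists y, adm_seq d om x y /\
              forall z, ucls z <-> (adm_seq d om x z /\ useq_equiv d om y z)
}.
Arguments ucls {X d om x} _ _.

Definition udist (X : nat -> Type) (d : forall n, X n -> X n -> R)
  (om : (nat -> Prop) -> R) (x : forall n, X n) (p q : upoint d om x) : R :=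
  epsilon (inhabits 0) (fun L => forall y z, ucls p y -> ucls q z ->
                                   ulim om (fun n => d n (y n) (z n)) L).

Definition adm_isom_seq (X : nat -> Type) (d : forall n, X n -> X n -> R)
  (om : (nat -> Prop) -> R) (x : forall n, X n) (g : forall n, X n -> X n) : Prop :=
  (forall n, isometry (d n) (g n)) /\
  exists M, om_as om (fun n => d n (g n (x n)) (x n) <= M).

Definition is_ulim_map (X : nat -> Type) (d : forall n, X n -> X n -> R)
  (om : (nat -> Prop) -> R) (x : forall n, X n) (g : forall n, X n -> X n)
  (f : upoint d om x -> upoint d om x) : Prop :=
  forall p y, ucls p y -> ucls (f p) (fun n => g n (y n)).

Definition ugroup (X : nat -> Type) (d : forall n, X n -> X n -> R)
  (om : (nat -> Prop) -> R) (x : forall n, X n)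
  (Gam : forall n, (X n -> X n) -> Prop) (f : upoint d om x -> upoint d om x) : Prop :=
  exists g, adm_isom_seq d om x g /\ om_as om (fun n => Gam n (g n)) /\
            @is_ulim_map X d om x g f.
Arguments ugroup {X} d om x Gam f.
Arguments udist {X} d om x p q.
Arguments is_ulim_map {X} d om x g f.

(** For closedness, take an isometry [f] of [X_om] approximated by elements of
    [Gamma_om] on every compact set.  Properness gives, for each [j], a lift
    [g^j] approximating [f] up to [1/(j+1)] on the ball [B(o,j)] and a finite
    [1/(j+1)]-net of that ball.  The approximation on the finitely many net
    points holds [om]-almost surely; a diagonal choice [n |-> g^(K n)_n] with
    [K n -> om-infinity] then tracks [f] on every point, so [f] lies in
    [Gamma_om]. *)

From Stdlib Require Import Reals Lra Lia Classical ClassicalEpsilon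
  FunctionalExtensionality PropExtensionality ProofIrrelevance List.
Open Scope R_scope.

(** ** Almost sure statements and ultralimits of real sequences *)

Section Ultrafilter.
Context {om : (nat -> Prop) -> R}.
Hypothesis Hom : nonprincipal_ultrafilter om.

Lemma om_ext (A B : nat -> Prop) : (forall n, A n <-> B n) -> om A = om B.
Proof.
  intros H. f_equal. apply functional_extensionality; intros n.
  apply propositional_extensionality; auto.
Qed.

Lemma om_compl (A : nat -> Prop) : om A + om (fun n => ~ A n) = 1.
Proof.
  destruct Hom as [_ [Htot [Hadd _]]].
  rewrite <- Hadd by tauto. rewrite <- Htot. apply om_ext.
  intros n; split; auto. intros _; apply classic.
Qed.

Lemma om_as_mono (A B : nat -> Prop) :
  om_as om A -> (forall n, A n -> B n) -> om_as om B.
Proof.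
  unfold om_as; intros HA HAB. destruct Hom as [H01 [_ [Hadd _]]].
  assert (split_B : om B = om A + om (fun n => B n /\ ~ A n)).
  { rewrite <- Hadd by tauto. apply om_ext; intros n; split.
    - intros Hb; destruct (classic (A n)); auto.
    - intros [a | [b _]]; auto. }
  destruct (H01 B), (H01 (fun n => B n /\ ~ A n)); lra.
Qed.

Lemma om_as_and (A B : nat -> Prop) :
  om_as om A -> om_as om B -> om_as om (fun n => A n /\ B n).
Proof.
  intros HA HB. destruct Hom as [H01 [_ [Hadd _]]].
  assert (split_A : om A = om (fun n => A n /\ B n) + om (fun n => A n /\ ~ B n)).
  { rewrite <- Hadd by tauto. apply om_ext; intros n; split.
    - intros a; destruct (classic (B n)); auto.
    - intros [[a _] | [a _]]; auto. }
  assert (notB : om (fun n => ~ B n) = 0) by (pose proof (om_compl B); unfold om_as in HB; lra).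
  assert (small : om (fun n => A n /\ ~ B n) = 0).
  { destruct (H01 (fun n => A n /\ ~ B n)) as [h | h]; auto.
    assert (om_as om (fun n => ~ B n)) by (eapply om_as_mono; [exact h | intros n [_ nb]; exact nb]).
    unfold om_as in *; lra. }
  unfold om_as in *; lra.
Qed.

(* Almost sure sets are nonempty, since finite sets are null. *)
Lemma om_as_ex (A : nat -> Prop) : om_as om A -> exists n, A n.
Proof.
  intros h. apply NNPP; intros hn. destruct Hom as [_ [_ [_ Hfin]]].
  unfold om_as in h. rewrite Hfin in h; [lra |].
  exists 0%nat. intros n an. exfalso; eauto.
Qed.

Lemma om_as_all (A : nat -> Prop) : (forall n, A n) -> om_as om A.
Proof. intros h. destruct Hom as [_ [Htot _]]. eapply om_as_mono; [exact Htot | auto]. Qed.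

Lemma om_as_ge (N : nat) : om_as om (fun n => (N <= n)%nat).
Proof.
  pose proof (om_compl (fun n => (N <= n)%nat)) as Hc. cbv beta in Hc.
  destruct Hom as [_ [_ [_ Hfin]]].
  rewrite (Hfin (fun n => ~ (N <= n)%nat)) in Hc by (exists N; intros; lia).
  unfold om_as; lra.
Qed.

Lemma om_as_forall_list {T : Type} (l : list T) (P : T -> nat -> Prop) :
  (forall q, In q l -> om_as om (P q)) ->
  om_as om (fun n => forall q, In q l -> P q n).
Proof.
  induction l as [| a l IH]; intros H.
  - apply om_as_all; intros n q [].
  - eapply om_as_mono.
    + apply om_as_and; [apply H; left; auto | apply IH; intros; apply H; right; auto].
    + intros n [ha hl] q [<- | hq]; auto.
Qed.

Lemma om_as_forall_le (k : nat) (P : nat -> nat -> Prop) :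
  (forall j, (j <= k)%nat -> om_as om (P j)) ->
  om_as om (fun n => forall j, (j <= k)%nat -> P j n).
Proof.
  intros H. eapply om_as_mono.
  - apply (om_as_forall_list (seq 0 (S k)) P).
    intros j hj. apply in_seq in hj. apply H; lia.
  - intros n h j hj. apply h, in_seq; lia.
Qed.

Fixpoint last_below (P : nat -> Prop) (m : nat) : nat :=
  match m with
  | O => O
  | S m' => if excluded_middle_informative (P (S m')) then S m' else last_below P m'
  end.

Lemma last_below_spec (P : nat -> Prop) (m k : nat) :
  (k <= m)%nat -> P k -> P (last_below P m) /\ (k <= last_below P m)%nat.
Proof.
  induction m as [| m IH]; intros hk hp; simpl.
  - replace k with 0%nat in * by lia. auto.
  - destruct (excluded_middle_informative (P (S m))) as [h | h]; [auto |].
    destruct (Nat.eq_dec k (S m)) as [-> | hne]; [contradiction |].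
    destruct IH as [h1 h2]; auto; lia.
Qed.

Lemma om_as_diagonal (C : nat -> nat -> Prop) :
  (forall j, om_as om (C j)) ->
  exists K : nat -> nat, forall k, om_as om (fun n => (k <= K n)%nat /\ C (K n) n).
Proof.
  intros HC. exists (fun n => last_below (fun j => C j n) n). intros k.
  eapply om_as_mono; [apply (om_as_and _ _ (om_as_ge k) (HC k)) |].
  intros n [hkn hC]. destruct (last_below_spec (fun j => C j n) n k hkn hC); auto.
Qed.

Lemma ulim_unique (a : nat -> R) (L1 L2 : R) : ulim om a L1 -> ulim om a L2 -> L1 = L2.
Proof.
  intros h1 h2. apply NNPP; intros hne.
  assert (he : 0 < Rabs (L1 - L2) / 2) by (pose proof (Rabs_pos_lt (L1 - L2)); lra).
  destruct (om_as_ex _ (om_as_and _ _ (h1 _ he) (h2 _ he))) as [n [u v]].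
  pose proof (Rabs_triang (L1 - a n) (a n - L2)).
  rewrite <- Rabs_Ropp in u. replace (- (a n - L1)) with (L1 - a n) in u by ring.
  replace (L1 - a n + (a n - L2)) with (L1 - L2) in * by ring. lra.
Qed.

Lemma ulim_lt (a : nat -> R) (L c : R) : ulim om a L -> L < c -> om_as om (fun n => a n < c).
Proof.
  intros h hc. eapply om_as_mono; [apply (h (c - L)); lra |].
  intros n hn. apply Rabs_def2 in hn. lra.
Qed.

Lemma ulim_gt (a : nat -> R) (L c : R) : ulim om a L -> c < L -> om_as om (fun n => c < a n).
Proof.
  intros h hc. eapply om_as_mono; [apply (h (L - c)); lra |].
  intros n hn. apply Rabs_def2 in hn. lra.
Qed.

Lemma ulim_le (a b : nat -> R) (La Lb : R) :
  ulim om a La -> ulim om b Lb -> om_as om (fun n => a n <= b n) -> La <= Lb.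
Proof.
  intros ha hb h. apply Rnot_lt_le; intros hl.
  pose proof (ulim_gt a La ((La + Lb) / 2) ha ltac:(lra)) as hga.
  pose proof (ulim_lt b Lb ((La + Lb) / 2) hb ltac:(lra)) as hlb.
  destruct (om_as_ex _ (om_as_and _ _ h (om_as_and _ _ hga hlb))) as [n [u [v w]]].
  lra.
Qed.

Lemma ulim_plus (a b : nat -> R) (La Lb : R) :
  ulim om a La -> ulim om b Lb -> ulim om (fun n => a n + b n) (La + Lb).
Proof.
  intros ha hb e he.
  eapply om_as_mono; [apply om_as_and; [apply (ha (e / 2)) | apply (hb (e / 2))]; lra |].
  intros n [u v]. replace (a n + b n - (La + Lb)) with ((a n - La) + (b n - Lb)) by ring.
  eapply Rle_lt_trans; [apply Rabs_triang | lra].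
Qed.

Lemma ulim_close (a c b1 b2 : nat -> R) (L : R) :
  ulim om a L -> ulim om b1 0 -> ulim om b2 0 ->
  (forall n, Rabs (c n - a n) <= Rabs (b1 n) + Rabs (b2 n)) -> ulim om c L.
Proof.
  intros ha h1 h2 H e he.
  eapply om_as_mono.
  - apply om_as_and; [apply (ha (e / 3)); lra |].
    apply om_as_and; [apply (h1 (e / 3)) | apply (h2 (e / 3))]; lra.
  - intros n [u [v w]]. rewrite Rminus_0_r in v, w. specialize (H n).
    replace (c n - L) with ((c n - a n) + (a n - L)) by ring.
    eapply Rle_lt_trans; [apply Rabs_triang | lra].
Qed.

Lemma ulim_zero (a : nat -> R) : (forall n, a n = 0) -> ulim om a 0.
Proof.
  intros h e he. apply om_as_all; intros n. rewrite h, Rminus_0_r, Rabs_R0; auto.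
Qed.

(* Almost surely bounded sequences have an ultralimit: the supremum of the
   reals [t] with [t <= a n] almost surely. *)
Lemma ulim_exists (a : nat -> R) (M : R) :
  om_as om (fun n => Rabs (a n) <= M) -> exists L, ulim om a L.
Proof.
  intros hM.
  set (E := fun t => om_as om (fun n => t <= a n)).
  assert (bnd : bound E).
  { exists M. intros t ht. apply Rnot_lt_le; intros hlt.
    destruct (om_as_ex _ (om_as_and _ _ ht hM)) as [n [u v]].
    pose proof (Rle_abs (a n)). lra. }
  assert (ne : exists t, E t).
  { exists (- M). eapply om_as_mono; [exact hM |].
    intros n h. pose proof (Rle_abs (- a n)). rewrite Rabs_Ropp in *. lra. }
  destruct (completeness E bnd ne) as [L [hub hlub]].
  exists L. intros e he.
  assert (below : om_as om (fun n => a n < L + e)).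
  { destruct Hom as [H01 _].
    destruct (H01 (fun n => L + e <= a n)) as [h | h].
    - pose proof (om_compl (fun n => L + e <= a n)) as hc. rewrite h, Rplus_0_l in hc.
      eapply om_as_mono; [exact hc | intros n hn; lra].
    - assert (L + e <= L) by (apply hub; exact h). lra. }
  assert (above : exists t, E t /\ L - e < t).
  { apply NNPP; intros hn. assert (L <= L - e); [| lra]. apply hlub. intros t ht.
    apply Rnot_lt_le; intros hl. apply hn; eauto. }
  destruct above as [t [ht hlt]].
  eapply om_as_mono; [apply (om_as_and _ _ below ht) |].
  intros n [u v]. apply Rabs_def1; lra.
Qed.

End Ultrafilter.

Section Metric.
Context {T : Type} {dd : T -> T -> R}.
Hypothesis Hm : is_metric dd.

Lemma metric_refl a : dd a a = 0.
Proof. apply (proj1 Hm); auto. Qed.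

Lemma metric_eq a b : dd a b = 0 -> a = b.
Proof. apply (proj1 Hm). Qed.

Lemma metric_sym a b : dd a b = dd b a.
Proof. apply (proj1 (proj2 Hm)). Qed.

Lemma metric_tri a b c : dd a c <= dd a b + dd b c.
Proof. apply (proj2 (proj2 Hm)). Qed.

Lemma metric_nonneg a b : 0 <= dd a b.
Proof. pose proof (metric_tri a b a). rewrite metric_refl, (metric_sym b a) in H. lra. Qed.

Definition inv_map (g : T -> T) (b : T) : T := epsilon (inhabits b) (fun a => g a = b).

Lemma inv_map_r g b : isometry dd g -> g (inv_map g b) = b.
Proof. intros [_ hsurj]. apply (epsilon_spec (inhabits b) (fun a => g a = b)), hsurj. Qed.

Lemma isometry_inj g a b : isometry dd g -> g a = g b -> a = b.
Proof. intros [hg _] e. apply metric_eq. rewrite <- hg, e. apply metric_refl. Qed.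

Lemma inv_map_l g a : isometry dd g -> inv_map g (g a) = a.
Proof. intros hg. eapply isometry_inj; [exact hg |]. apply inv_map_r; auto. Qed.

Lemma inv_map_isometry g : isometry dd g -> isometry dd (inv_map g).
Proof.
  intros hg. split.
  - intros a b. rewrite <- (proj1 hg (inv_map g a)), !inv_map_r; auto.
  - intros b. exists (g b). apply inv_map_l; auto.
Qed.

(* Comparing [g a] with [e] through a nearby point [b] and its approximate
   image [c]. *)
Lemma isometry_dist_via (g : T -> T) a b c e :
  isometry dd g -> dd (g a) e <= dd b a + dd (g b) c + dd c e.
Proof.
  intros [hg _]. pose proof (metric_tri (g a) (g b) e). pose proof (metric_tri (g b) c e).
  rewrite (metric_sym (g a) (g b)), hg in *. lra.
Qed.

Lemma compact_ball_net (o : T) (r eps : R) :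
  0 < eps -> mcompact dd (fun b => dd o b <= r) ->
  exists l : list T, forall p, dd o p <= r ->
    exists q, In q l /\ dd o q <= r /\ dd q p < eps.
Proof.
  intros he Hc.
  destruct (Hc T (fun q p => dd o q <= r /\ dd q p < eps)) as [l hl].
  - intros q p [hq hp]. exists (eps - dd q p). split; [lra |].
    intros b hb. split; auto. pose proof (metric_tri q p b). lra.
  - intros p hp. exists p. rewrite metric_refl. auto.
  - exists l. intros p hp. destruct (hl p hp) as [q [hin [hq hqp]]]. eauto.
Qed.

End Metric.

(** ** The ultralimit metric space *)

Section UltralimitSpace.
Variable X : nat -> Type.
Variable d : forall n, X n -> X n -> R.
Variable x : forall n, X n.
Variable om : (nat -> Prop) -> R.
Hypothesis Hd : forall n, is_metric (d n).
Hypothesis Hom : nonprincipal_ultrafilter om.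

Notation adm := (adm_seq d om x).
Notation eqv := (useq_equiv d om).
Notation pt := (upoint d om x).
Notation ud := (udist d om x).

Lemma eqv_refl (y : forall n, X n) : eqv y y.
Proof. apply (ulim_zero Hom). intros n; apply metric_refl, Hd. Qed.

Lemma eqv_sym (y z : forall n, X n) : eqv y z -> eqv z y.
Proof.
  intros h e he. eapply (om_as_mono Hom); [apply (h e he) |].
  intros n. rewrite (metric_sym (Hd n)). auto.
Qed.

Lemma eqv_trans (y z w : forall n, X n) : eqv y z -> eqv z w -> eqv y w.
Proof.
  intros h1 h2.
  apply (ulim_close Hom (fun _ => 0) _ _ _ 0 (ulim_zero Hom _ (fun _ => eq_refl)) h1 h2).
  intros n. pose proof (metric_tri (Hd n) (y n) (z n) (w n)).
  pose proof (metric_nonneg (Hd n) (y n) (w n)).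
  pose proof (metric_nonneg (Hd n) (y n) (z n)). pose proof (metric_nonneg (Hd n) (z n) (w n)).
  rewrite Rminus_0_r, !Rabs_right by lra. lra.
Qed.

Lemma adm_dist_ulim {y z : forall n, X n} :
  adm y -> adm z -> exists L, ulim om (fun n => d n (y n) (z n)) L.
Proof.
  intros [M1 h1] [M2 h2]. apply (ulim_exists Hom _ (M1 + M2)).
  eapply (om_as_mono Hom); [apply (om_as_and Hom _ _ h1 h2) |]. intros n [u v].
  pose proof (metric_tri (Hd n) (y n) (x n) (z n)).
  pose proof (metric_nonneg (Hd n) (y n) (z n)).
  rewrite (metric_sym (Hd n) (y n) (x n)) in H. rewrite Rabs_right; lra.
Qed.

Lemma ucls_adm {p : pt} {y} : ucls p y -> adm y.
Proof. destruct (ucls_ok p) as [y0 [hy h]]. intros hp; apply h; auto. Qed.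

Lemma ucls_eqv {p : pt} {y z} : ucls p y -> ucls p z -> eqv y z.
Proof.
  destruct (ucls_ok p) as [y0 [hy h]]. intros h1 h2. apply h in h1. apply h in h2.
  eapply eqv_trans; [apply eqv_sym, h1 | apply h2].
Qed.

Lemma ucls_transfer {p : pt} {y z} : ucls p y -> adm z -> eqv y z -> ucls p z.
Proof.
  destruct (ucls_ok p) as [y0 [hy h]]. intros h1 hz e. apply h in h1.
  apply h. split; auto. eapply eqv_trans; [apply h1 | auto].
Qed.

Lemma pt_share {p q : pt} {y} : ucls p y -> ucls q y -> p = q.
Proof.
  intros hp hq.
  assert (same : forall z, ucls p z <-> ucls q z).
  { intros z; split; intros hz.
    - apply (ucls_transfer hq); [eapply ucls_adm; exact hz | exact (ucls_eqv hp hz)].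
    - apply (ucls_transfer hp); [eapply ucls_adm; exact hz | exact (ucls_eqv hq hz)]. }
  destruct p as [cp op], q as [cq oq]; simpl in *.
  assert (cp = cq) by (apply functional_extensionality; intros z;
                       apply propositional_extensionality; auto).
  subst cq. f_equal. apply proof_irrelevance.
Qed.

Lemma pt_exists y : adm y -> exists p : pt, ucls p y.
Proof.
  intros hy.
  exists (@UPoint X d om x (fun z => adm z /\ eqv y z) (ex_intro _ y (conj hy (fun z => iff_refl _)))).
  simpl. split; auto. apply eqv_refl.
Qed.

Lemma base_point : exists o : pt, ucls o x.
Proof.
  apply pt_exists. exists 0. apply (om_as_all Hom).
  intros n. rewrite (metric_refl (Hd n)). lra.
Qed.

Definition rep (p : pt) : forall n, X n := epsilon (inhabits x) (fun y => ucls p y).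

Lemma rep_spec (p : pt) : ucls p (rep p).
Proof.
  apply (epsilon_spec (inhabits x) (fun y => ucls p y)).
  destruct (ucls_ok p) as [y [hy h]]. exists y. apply h. split; auto. apply eqv_refl.
Qed.

Lemma udist_spec {p q : pt} {y z} :
  ucls p y -> ucls q z -> ulim om (fun n => d n (y n) (z n)) (ud p q).
Proof.
  intros hy hz. unfold udist.
  assert (ex : exists L, forall y z, ucls p y -> ucls q z -> ulim om (fun n => d n (y n) (z n)) L).
  { destruct (adm_dist_ulim (ucls_adm (rep_spec p)) (ucls_adm (rep_spec q))) as [L hL].
    exists L. intros y' z' h1 h2.
    apply (ulim_close Hom _ _ (fun n => d n (rep p n) (y' n)) (fun n => d n (rep q n) (z' n)) L hL
             (ucls_eqv (rep_spec p) h1) (ucls_eqv (rep_spec q) h2)).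
    intros n. set (a := rep p n). set (b := rep q n).
    pose proof (metric_nonneg (Hd n) a (y' n)). pose proof (metric_nonneg (Hd n) b (z' n)).
    pose proof (metric_tri (Hd n) (y' n) a (z' n)). pose proof (metric_tri (Hd n) a b (z' n)).
    pose proof (metric_tri (Hd n) a (y' n) b). pose proof (metric_tri (Hd n) (y' n) (z' n) b).
    rewrite (metric_sym (Hd n) (y' n) a), (metric_sym (Hd n) (z' n) b) in *.
    rewrite (Rabs_right (d n a (y' n))), (Rabs_right (d n b (z' n))) by lra.
    apply Rabs_le. lra. }
  exact (epsilon_spec (inhabits 0) _ ex y z hy hz).
Qed.

Lemma udist_eq {p q : pt} {y z} {L : R} :
  ucls p y -> ucls q z -> ulim om (fun n => d n (y n) (z n)) L -> ud p q = L.
Proof. intros h1 h2 h. exact (ulim_unique Hom _ _ _ (udist_spec h1 h2) h). Qed.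

Lemma udist_lt {p q : pt} {y z} {c : R} :
  ucls p y -> ucls q z -> ud p q < c -> om_as om (fun n => d n (y n) (z n) < c).
Proof. intros h1 h2 h. exact (ulim_lt Hom _ _ _ (udist_spec h1 h2) h). Qed.

Lemma udist_metric : is_metric ud.
Proof.
  split; [| split].
  - intros p q; split.
    + intros h0. apply (pt_share (rep_spec p)).
      apply (ucls_transfer (rep_spec q) (ucls_adm (rep_spec p))).
      apply eqv_sym. unfold useq_equiv. rewrite <- h0. apply udist_spec; apply rep_spec.
    + intros <-. apply (udist_eq (rep_spec p) (rep_spec p)).
      apply (ulim_zero Hom). intros n; apply (metric_refl (Hd n)).
  - intros p q. apply (udist_eq (rep_spec p) (rep_spec q)).
    replace (fun n => d n (rep p n) (rep q n)) with (fun n => d n (rep q n) (rep p n))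
      by (apply functional_extensionality; intros; apply (metric_sym (Hd _))).
    apply udist_spec; apply rep_spec.
  - intros p q r.
    apply (ulim_le Hom _ _ _ _ (udist_spec (rep_spec p) (rep_spec r))
             (ulim_plus Hom _ _ _ _ (udist_spec (rep_spec p) (rep_spec q))
                                    (udist_spec (rep_spec q) (rep_spec r)))).
    apply (om_as_all Hom). intros n; apply (metric_tri (Hd n)).
Qed.

Lemma adm_image {G : forall n, X n -> X n} {y} :
  adm_isom_seq d om x G -> adm y -> adm (fun n => G n (y n)).
Proof.
  intros [hiso [M hM]] [My hy]. exists (M + My).
  eapply (om_as_mono Hom); [apply (om_as_and Hom _ _ hM hy) |]. intros n [u v].
  pose proof (metric_tri (Hd n) (x n) (G n (x n)) (G n (y n))) as htri.
  rewrite (proj1 (hiso n)), (metric_sym (Hd n) (x n) (G n (x n))) in htri. lra.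
Qed.

Lemma ulim_map_exists {G : forall n, X n -> X n} :
  adm_isom_seq d om x G -> exists f : pt -> pt, is_ulim_map d om x G f.
Proof.
  intros hG.
  destruct (choice (fun p q : pt => ucls q (fun n => G n (rep p n)))) as [f hf].
  { intros p. apply pt_exists, adm_image, (ucls_adm (rep_spec p)); auto. }
  exists f. intros p y hy.
  apply (ucls_transfer (hf p) (adm_image hG (ucls_adm hy))).
  intros e he. eapply (om_as_mono Hom); [apply (ucls_eqv (rep_spec p) hy e he) |].
  intros n. rewrite (proj1 (proj1 hG n)). auto.
Qed.

Lemma ulim_map_isometric {G : forall n, X n -> X n} {f : pt -> pt} :
  (forall n, isometry (d n) (G n)) -> is_ulim_map d om x G f ->
  forall p q, ud (f p) (f q) = ud p q.
Proof.
  intros hiso hf p q. apply (udist_eq (hf _ _ (rep_spec p)) (hf _ _ (rep_spec q))).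
  replace (fun n => d n (G n (rep p n)) (G n (rep q n))) with (fun n => d n (rep p n) (rep q n))
    by (apply functional_extensionality; intros n; rewrite (proj1 (hiso n)); auto).
  apply udist_spec; apply rep_spec.
Qed.

Lemma ulim_map_id (G : forall n, X n -> X n) (f : pt -> pt) :
  (forall n a, G n a = a) -> is_ulim_map d om x G f -> forall p, f p = p.
Proof.
  intros hid hf p. apply (pt_share (hf _ _ (rep_spec p))).
  replace (fun n => G n (rep p n)) with (rep p)
    by (apply functional_extensionality_dep; intros n; rewrite hid; auto).
  apply rep_spec.
Qed.

Lemma inv_isom_seq {G : forall n, X n -> X n} :
  adm_isom_seq d om x G -> adm_isom_seq d om x (fun n => inv_map (G n)).
Proof.
  intros [hiso [M hM]]. split; [intros n; apply (inv_map_isometry (Hd n)), hiso |].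
  exists M. eapply (om_as_mono Hom); [exact hM |]. intros n hn.
  rewrite <- (proj1 (hiso n)), (inv_map_r (G n) (x n) (hiso n)), (metric_sym (Hd n)); auto.
Qed.

Variable Gam : forall n, (X n -> X n) -> Prop.

Notation UG := (ugroup d om x Gam).

Section Subgroup.
Hypothesis HG : forall n, is_subgroup_isom (d n) (Gam n).

Lemma group_inv_map n (g : X n -> X n) : Gam n g -> Gam n (inv_map g).
Proof.
  intros hg. destruct (HG n) as [hiso [_ [_ hinv]]].
  destruct (hinv g hg) as [h [hh [_ hr]]].
  replace (inv_map g) with h; auto. apply functional_extensionality; intros b.
  apply (isometry_inj (Hd n) g); [apply hiso; auto |].
  rewrite hr, (inv_map_r g b (hiso g hg)). reflexivity.
Qed.

Lemma ugroup_id : UG (fun p => p).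
Proof.
  exists (fun n a => a). split; [split | split].
  - intros n. split; [auto | intros b; exists b; auto].
  - exists 0. apply (om_as_all Hom). intros n. rewrite (metric_refl (Hd n)). lra.
  - apply (om_as_all Hom). intros n. apply HG.
  - intros p y hy. exact hy.
Qed.

Lemma ugroup_comp {f1 f2} : UG f1 -> UG f2 -> UG (fun p => f1 (f2 p)).
Proof.
  intros [G1 [[hi1 [M1 hM1]] [hGam1 hf1]]] [G2 [[hi2 [M2 hM2]] [hGam2 hf2]]].
  exists (fun n a => G1 n (G2 n a)). split; [split | split].
  - intros n. split.
    + intros a b. rewrite (proj1 (hi1 n)), (proj1 (hi2 n)). reflexivity.
    + intros b. destruct (proj2 (hi1 n) b) as [c hc], (proj2 (hi2 n) c) as [a ha].
      exists a. rewrite ha. exact hc.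
  - exists (M1 + M2). eapply (om_as_mono Hom); [apply (om_as_and Hom _ _ hM1 hM2) |].
    intros n [u v].
    pose proof (metric_tri (Hd n) (G1 n (G2 n (x n))) (G1 n (x n)) (x n)) as htri.
    rewrite (proj1 (hi1 n)) in htri. lra.
  - eapply (om_as_mono Hom); [apply (om_as_and Hom _ _ hGam1 hGam2) |].
    intros n [u v]. apply HG; auto.
  - intros p y hy. apply hf1, hf2, hy.
Qed.

Lemma ugroup_inv {f} : UG f -> exists h, UG h /\ (forall p, h (f p) = p) /\ (forall p, f (h p) = p).
Proof.
  intros [G [hG [hGam hf]]].
  pose proof (inv_isom_seq hG) as hH.
  destruct (ulim_map_exists hH) as [h hh].
  assert (hiso : forall n, isometry (d n) (G n)) by apply hG.
  exists h. split; [| split].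
  - exists (fun n => inv_map (G n)). split; [exact hH | split; [| exact hh]].
    eapply (om_as_mono Hom); [exact hGam |]. intros n. apply group_inv_map.
  - apply (ulim_map_id (fun n a => inv_map (G n) (G n a))).
    + intros n a. apply (inv_map_l (Hd n)), hiso.
    + intros p y hy. apply hh, hf, hy.
  - apply (ulim_map_id (fun n a => G n (inv_map (G n) a))).
    + intros n a. exact (inv_map_r (G n) a (hiso n)).
    + intros p y hy. apply hf, hh, hy.
Qed.

Lemma ugroup_isometry f : UG f -> isometry ud f.
Proof.
  intros hf. split.
  - destruct hf as [G [hG [_ hmap]]]. apply (ulim_map_isometric (proj1 hG) hmap).
  - intros q. destruct (ugroup_inv hf) as [h [_ [_ hfh]]]. exists (h q). apply hfh.
Qed.

Lemma ugroup_subgroup : is_subgroup_isom ud UG.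
Proof.
  split; [apply ugroup_isometry | split; [apply ugroup_id | split]].
  - intros g h hg hh. exact (ugroup_comp hg hh).
  - intros g hg. exact (ugroup_inv hg).
Qed.

End Subgroup.

(** ** Closedness of the ultralimit group *)

Definition tol (j : nat) : R := / (INR j + 1).

Lemma tol_pos j : 0 < tol j.
Proof. unfold tol. apply Rinv_0_lt_compat. pose proof (pos_INR j). lra. Qed.

Lemma tol_antitone j k : (j <= k)%nat -> tol k <= tol j.
Proof.
  intros h. unfold tol. pose proof (pos_INR j). pose proof (le_INR _ _ h).
  apply Rinv_le_contravar; lra.
Qed.

Lemma tol_eventually_small (r eps : R) : 0 < eps -> exists k, r <= INR k /\ tol k < eps.
Proof.
  intros he. destruct (INR_unbounded (Rmax r (/ eps))) as [k hk].
  pose proof (Rmax_l r (/ eps)). pose proof (Rmax_r r (/ eps)).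
  exists k. split; [lra |]. unfold tol. rewrite <- (Rinv_inv eps).
  apply Rinv_lt_contravar; [| lra].
  apply Rmult_lt_0_compat; [apply Rinv_0_lt_compat; auto | pose proof (pos_INR k); lra].
Qed.

Lemma tracking_ulim_map (H : forall n, X n -> X n) (f : pt -> pt) :
  (forall n, isometry (d n) (H n)) ->
  (forall p y eps, ucls p y -> 0 < eps ->
     om_as om (fun n => d n (H n (y n)) (rep (f p) n) < eps)) ->
  adm_isom_seq d om x H /\ is_ulim_map d om x H f.
Proof.
  intros hiso htrack.
  assert (hH : adm_isom_seq d om x H).
  { split; [exact hiso |]. destruct base_point as [o ho].
    destruct (ucls_adm (rep_spec (f o))) as [Mz hMz]. exists (1 + Mz).
    eapply (om_as_mono Hom); [apply (om_as_and Hom _ _ hMz (htrack o x 1 ho Rlt_0_1)) |].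
    intros n [u v].
    pose proof (metric_tri (Hd n) (H n (x n)) (rep (f o) n) (x n)).
    rewrite (metric_sym (Hd n) (rep (f o) n)) in *. lra. }
  split; [exact hH |]. intros p y hy.
  apply (ucls_transfer (rep_spec (f p)) (adm_image hH (ucls_adm hy))).
  intros e he. eapply (om_as_mono Hom); [apply (htrack p y e hy he) |].
  intros n hn. rewrite Rminus_0_r, Rabs_right, (metric_sym (Hd n)); auto.
  apply Rle_ge, (metric_nonneg (Hd n)).
Qed.

Definition stage_lift (f : pt -> pt) (o : pt) (j : nat) (Gj : forall n, X n -> X n) : Prop :=
  (forall n, isometry (d n) (Gj n)) /\ om_as om (fun n => Gam n (Gj n)) /\
  forall q, ud o q <= INR j ->
    om_as om (fun n => d n (Gj n (rep q n)) (rep (f q) n) < tol j).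

(* If [f] is approximable by [Gam_om] on compacta, stage lifts exist at every
   stage: approximate [f] on the compact ball and lift the approximant. *)
Lemma stage_lifts_exist (f : pt -> pt) (o : pt) :
  mproper ud ->
  (forall K, mcompact ud K -> forall eps, 0 < eps ->
     exists g, UG g /\ forall a, K a -> ud (g a) (f a) < eps) ->
  exists G : nat -> (forall n, X n -> X n), forall j, stage_lift f o j (G j).
Proof.
  intros HP happ. apply choice. intros j.
  destruct (happ _ (HP o (INR j)) (tol j) (tol_pos j)) as [g [[G [hG [hGam hmap]]] hclose]].
  exists G. split; [apply hG | split; [exact hGam |]].
  intros q hq. exact (udist_lt (hmap _ _ (rep_spec q)) (rep_spec (f q)) (hclose q hq)).
Qed.

Lemma ugroup_closed : mproper ud -> ucc_closed ud UG.
Proof.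
  intros HP f hf happ. destruct base_point as [o ho].
  destruct (stage_lifts_exist f o HP happ) as [G hG].
  destruct (choice (fun j (l : list pt) => forall p, ud o p <= INR j ->
              exists q, In q l /\ ud o q <= INR j /\ ud q p < tol j)) as [net hnet].
  { intros j. apply (compact_ball_net udist_metric); [apply tol_pos | apply HP]. }
  set (good := fun j n => Gam n (G j n) /\
         forall i, (i <= j)%nat -> forall q, In q (net i) -> ud o q <= INR i ->
           d n (G j n (rep q n)) (rep (f q) n) < tol j).
  assert (good_as : forall j, om_as om (good j)).
  { intros j. destruct (hG j) as [_ [hGam happrox]]. apply (om_as_and Hom _ _ hGam).
    apply (om_as_forall_le Hom). intros i hi.
    apply (om_as_forall_list Hom). intros q _.
    destruct (classic (ud o q <= INR i)) as [hq | hq].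
    - eapply (om_as_mono Hom); [apply (happrox q); pose proof (le_INR _ _ hi); lra | auto].
    - apply (om_as_all Hom). intros n hq'; contradiction. }
  destruct (om_as_diagonal Hom good good_as) as [K hK].
  assert (htrack : forall p y eps, ucls p y -> 0 < eps ->
            om_as om (fun n => d n (G (K n) n (y n)) (rep (f p) n) < eps)).
  { intros p y eps hy he.
    destruct (tol_eventually_small (ud o p) (eps / 3)) as [k [hk htol]]; [lra |].
    destruct (hnet k p hk) as [q [hq [hoq hqp]]].
    pose proof (udist_lt (rep_spec q) hy hqp) as near_q.
    assert (hfqp : ud (f q) (f p) < tol k) by (rewrite (proj1 hf); exact hqp).
    pose proof (udist_lt (rep_spec (f q)) (rep_spec (f p)) hfqp) as near_fq.
    eapply (om_as_mono Hom); [apply (om_as_and Hom _ _ (hK k) (om_as_and Hom _ _ near_q near_fq)) |].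
    intros n [[hkK [_ hgood]] [u v]].
    pose proof (hgood k hkK q hq hoq). pose proof (tol_antitone k (K n) hkK).
    pose proof (isometry_dist_via (Hd n) (G (K n) n) (y n) (rep q n) (rep (f q) n) (rep (f p) n)
                  (proj1 (hG (K n)) n)).
    lra. }
  destruct (tracking_ulim_map (fun n => G (K n) n) f (fun n => proj1 (hG (K n)) n) htrack)
    as [hadm hmap].
  exists (fun n => G (K n) n). split; [exact hadm | split; [| exact hmap]].
  eapply (om_as_mono Hom); [apply (hK 0%nat) | intros n [_ [hgam _]]; exact hgam].
Qed.

End UltralimitSpace.

Theorem mainTheorem7 (X : nat -> Type) (d : forall n, X n -> X n -> R)
  (x : forall n, X n) (Gam : forall n, (X n -> X n) -> Prop)
  (om : (nat -> Prop) -> R) :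
  (forall n, is_metric (d n)) ->
  (forall n, mproper (d n)) ->
  (forall n, is_subgroup_isom (d n) (Gam n)) ->
  nonprincipal_ultrafilter om ->
  mproper (udist d om x) ->
  is_subgroup_isom (udist d om x) (ugroup d om x Gam) /\
  ucc_closed (udist d om x) (ugroup d om x Gam).
Proof.
  intros Hd _ HG Hom HP. split.
  - exact (ugroup_subgroup X d x om Hd Hom Gam HG).
  - exact (ugroup_closed X d x om Hd Hom Gam HP).
Qed.
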